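(* Let $G_i=(V_i,E_i)$ be a graph of minimum degree $\delta_i$, $i\in\{1,2\}$, let $S\subseteq V_1\times V_2$ and let $k$ be an integer. If for some $i\in\{1,2\}$ the projection $P_{V_i}(S)$ is a $k$-oaf set in $G_i$, then $S$ is a $(k-\delta_j)$-oaf set in $G_1\times G_2$, where $j\in\{1,2\}$, $j\neq i$.
   Context: All graphs are finite and simple. For a graph $G=(V,E)$, a set $S\subseteq V$ and $v\in V$, let $\delta_S(v)=|\{u\in S: uv\in E\}|$, $\overline{S}=V\setminus S$, and let $\partial S$ be the set of vertices of $\overline S$ adjacent to at least one vertex of $S$. For an integer $k$, a non-empty set $S\subseteq V$ is an offensive $k$-alliance if $\delta_S(v)\ge \delta_{\overline S}(v)+k$ for every $v\in \partial S$. A set $X\subseteq V$ is an offensive $k$-alliance free set ($k$-oaf set) if no offensive $k$-alliance $S$ satisfies $S\subseteq X$. The Cartesian product $G_1\times G_2$ of $G_1=(V_1,E_1)$, $G_2=(V_2,E_2)$ has vertex set $V_1\times V_2$, with $(a,b)$ adjacent to $(c,d)$ iff either $a=c$ and $bd\in E_2$, or $b=d$ and $ac\in E_1$. For $A\subseteq V_1\times V_2$, $P_{V_i}(A)$ denotes the projection of $A$ onto $V_i$. *)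

From HB Require Import structures.
From mathcomp Require Import all_boot all_order all_algebra.
Set Implicit Arguments. Unset Strict Implicit. Unset Printing Implicit Defensive.
Import Order.TTheory GRing.Theory Num.Theory.

Definition simple_graph (T : finType) (e : rel T) : Prop :=
  symmetric e /\ irreflexive e.

Definition deg_in (T : finType) (e : rel T) (S : {set T}) (v : T) : nat :=
  #|[set u in S | e u v]|.

Definition deg (T : finType) (e : rel T) (v : T) : nat := deg_in e setT v.

(* minimum degree; (for an empty vertex set this is #|T| = 0) *)
Definition mindeg (T : finType) (e : rel T) : nat :=
  \big[minn/#|T|]_(v : T) deg e v.

Definition boundary (T : finType) (e : rel T) (S : {set T}) : {set T} :=
  [set v in ~: S | [exists u in S, e u v]].

Definition off_alliance (T : finType) (e : rel T) (k : int) (S : {set T}) : Prop :=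
  S != set0 /\
  forall v, v \in boundary e S ->
    ((deg_in e (~: S) v)%:Z + k <= (deg_in e S v)%:Z)%R.

Definition oaf (T : finType) (e : rel T) (k : int) (X : {set T}) : Prop :=
  forall S : {set T}, S \subset X -> ~ off_alliance e k S.

Definition cart_prod (T1 T2 : finType) (e1 : rel T1) (e2 : rel T2)
  : rel (T1 * T2) :=
  fun x y => ((x.1 == y.1) && e2 x.2 y.2) || ((x.2 == y.2) && e1 x.1 y.1).

Definition proj1 (T1 T2 : finType) (A : {set T1 * T2}) : {set T1} :=
  [set x.1 | x in A].
Definition proj2 (T1 T2 : finType) (A : {set T1 * T2}) : {set T2} :=
  [set x.2 | x in A].

From HB Require Import structures.
From mathcomp Require Import all_boot all_order all_algebra zify.
Import Order.TTheory GRing.Theory Num.Theory.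

Set Implicit Arguments.
Unset Strict Implicit.
Unset Printing Implicit Defensive.

(* Suppose a subset S' of S were an offensive (k - delta_2)-alliance of
   G1 x G2, and let A be its first projection.  We show that A is then an
   offensive k-alliance of G1 contained in proj1 S, which is impossible when
   proj1 S is k-oaf.  For a vertex a on the boundary of A in G1, pick
   (x1, y) in S' with x1 adjacent to a; then (a, y) lies on the boundary of
   S' and, because no vertex of the fibre {a} x V2 is in S',
     - its neighbours in S' are among the (w, y) with w in A, so
       delta_{S'}(a, y) <= delta_A(a);
     - its neighbours outside S' contain the whole fibre {a} x N(y) and the
       (w, y) with w adjacent to a outside A, so
       deg(y) + delta_{~A}(a) <= delta_{~S'}(a, y).
   Combined with delta_2 <= deg(y) this gives the k-alliance inequality at a.
   The second half of the theorem follows from the first by the isomorphism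
   (x, y) |-> (y, x) between G1 x G2 and G2 x G1, using that oaf sets are
   preserved by graph isomorphisms. *)

Lemma mindeg_le (T : finType) (e : rel T) (v : T) : mindeg e <= deg e v.
Proof.
rewrite /mindeg; have : v \in index_enum T by rewrite mem_index_enum.
elim: (index_enum T) => [//|a r IH]; rewrite inE big_cons => /orP [/eqP <-|vr].
  exact: geq_minl.
by rewrite geq_min IH ?orbT.
Qed.

Lemma imset_can {A B : finType} {p : A -> B} {q : B -> A} (pK : cancel p q)
  (D : {set A}) : q @: (p @: D) = D.
Proof. by rewrite -imset_comp (eq_imset _ pK) imset_id. Qed.

Section Isomorphism.

Variables (T T' : finType) (e : rel T) (e' : rel T') (f : T -> T').
Variables (g : T' -> T) (fK : cancel f g) (gK : cancel g f).
Hypothesis f_edge : forall x y, e' (f x) (f y) = e x y.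

Let f_inj : injective f := can_inj fK.

Lemma imset_isoC (S : {set T}) : ~: (f @: S) = f @: ~: S.
Proof. by rewrite !(can2_imset_pre _ fK gK) preimsetC. Qed.

Lemma deg_in_iso (S : {set T}) (v : T) :
  deg_in e' (f @: S) (f v) = deg_in e S v.
Proof.
rewrite /deg_in -(card_imset [set u in S | e u v] f_inj); congr #|pred_of_set _|.
by apply/setP => u; rewrite -[u]gK !inE !(mem_imset _ _ f_inj) inE f_edge.
Qed.

Lemma boundary_iso (S : {set T}) :
  boundary e' (f @: S) = f @: boundary e S.
Proof.
apply/setP => u; rewrite -[u]gK (mem_imset _ _ f_inj) !inE (mem_imset _ _ f_inj).
congr (_ && _); apply/existsP/existsP.
  by case=> w /andP [/imsetP [x xS ->]]; rewrite f_edge => exu; exists x; rewrite xS.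
by case=> x /andP [xS exu]; exists (f x); rewrite (mem_imset _ _ f_inj) xS f_edge.
Qed.

Lemma off_alliance_iso (k : int) (S : {set T}) :
  off_alliance e' k (f @: S) -> off_alliance e k S.
Proof.
case=> [S_n0 S_all]; split; first by rewrite -(imset_eq0 f).
move=> v vB; have := S_all (f v).
by rewrite boundary_iso (mem_imset _ _ f_inj) imset_isoC !deg_in_iso; apply.
Qed.

Lemma oaf_iso (k : int) (X : {set T}) : oaf e k X -> oaf e' k (f @: X).
Proof.
move=> X_oaf S' sS'X; rewrite -(imset_can gK S') => /off_alliance_iso.
by apply: X_oaf; rewrite -(imset_can fK X) imsetS.
Qed.

End Isomorphism.

Lemma transfer_ineq (k : int) (inS outS inA outA degy d : nat) :
  (outS%:Z + (k - d%:Z) <= inS%:Z)%R -> inS <= inA ->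
  degy + outA <= outS -> d <= degy -> (outA%:Z + k <= inA%:Z)%R.
Proof. lia. Qed.

Section CartesianProduct.

Variables (T1 T2 : finType) (e1 : rel T1) (e2 : rel T2).
Local Notation G := (cart_prod e1 e2).

Lemma notin_proj1 (S : {set T1 * T2}) (u : T1 * T2) :
  u.1 \notin proj1 S -> u \notin S.
Proof. by apply: contra => uS; apply: imset_f. Qed.

Lemma boundary_proj1 (S : {set T1 * T2}) (a : T1) :
  a \in boundary e1 (proj1 S) ->
  exists y, (a, y) \in boundary G S.
Proof.
rewrite inE in_setC => /andP [aA /existsP [_ /andP [/imsetP [x xS ->] ex]]].
exists x.2; rewrite inE in_setC notin_proj1 //=; apply/existsP; exists x.
by rewrite xS /cart_prod /= eqxx ex orbT.
Qed.

Section Fibre.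

Variables (S : {set T1 * T2}) (a : T1) (y : T2).
Hypothesis aA : a \notin proj1 S.

(* Neighbours of (a, y) in S all lie in the layer V1 x {y}. *)
Lemma deg_in_fibre_le : deg_in G S (a, y) <= deg_in e1 (proj1 S) a.
Proof.
rewrite /deg_in; apply: leq_trans (leq_imset_card (fun w => (w, y)) _).
apply: subset_leq_card; apply/subsetP => u; rewrite !inE /cart_prod /=.
case/andP=> uS /orP [/andP [/eqP u1a _] | /andP [/eqP u2y eu]].
  by have := @notin_proj1 S u; rewrite u1a uS => /(_ aA).
apply/imsetP; exists u.1; last by rewrite -u2y -surjective_pairing.
by rewrite inE eu imset_f.
Qed.

(* Outside S, (a, y) sees its whole fibre neighbourhood {a} x N(y) and the
   vertices (w, y) with w a neighbour of a outside proj1 S. *)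
Lemma deg_in_fibre_ge :
  irreflexive e1 ->
  deg e2 y + deg_in e1 (~: proj1 S) a <= deg_in G (~: S) (a, y).
Proof.
move=> e1_irr; rewrite /deg /deg_in.
set N2 := [set u in setT | e2 u y]; set N1 := [set w in ~: proj1 S | e1 w a].
have pair_a_inj : injective (pair a : T2 -> T1 * T2) by move=> ? ? [].
have pair_y_inj : injective (fun w : T1 => (w, y)) by move=> ? ? [].
rewrite -(card_imset N2 pair_a_inj) -(card_imset N1 pair_y_inj).
have disjoint_layers : (pair a @: N2) :&: ((fun w => (w, y)) @: N1) = set0.
  apply/setP => u; rewrite !inE; apply/negP.
  case/andP=> /imsetP [y' _ ->] /imsetP [w]; rewrite !inE => /andP [_ ewa] [wa _].
  by move: ewa; rewrite -wa e1_irr.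
rewrite -cardsUI disjoint_layers cards0 addn0; apply: subset_leq_card.
apply/subsetP => u; rewrite !inE /cart_prod /=.
case/orP=> /imsetP [z]; rewrite !inE => zN ->{u} /=.
  by rewrite eqxx zN notin_proj1.
case/andP: zN => zA eza; rewrite eza eqxx orbT andbT.
exact: notin_proj1.
Qed.

End Fibre.

Lemma off_alliance_proj1 (k : int) (S : {set T1 * T2}) :
  irreflexive e1 ->
  off_alliance G (k - (mindeg e2)%:Z)%R S -> off_alliance e1 k (proj1 S).
Proof.
move=> e1_irr [S_n0 S_all]; split; first by rewrite imset_eq0.
move=> a aB; have [y ayB] := boundary_proj1 aB.
have aA : a \notin proj1 S by move: aB; rewrite inE in_setC => /andP [].
apply: (transfer_ineq (S_all _ ayB) (deg_in_fibre_le y aA)).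
  exact: deg_in_fibre_ge.
exact: mindeg_le.
Qed.

Lemma oaf_proj1 (k : int) (S : {set T1 * T2}) :
  irreflexive e1 ->
  oaf e1 k (proj1 S) -> oaf G (k - (mindeg e2)%:Z)%R S.
Proof.
move=> e1_irr S_oaf S' sS'S /(off_alliance_proj1 e1_irr).
by apply: S_oaf; apply: imsetS.
Qed.

Lemma cart_prod_swap (u v : T1 * T2) :
  cart_prod e2 e1 (swap_pair u) (swap_pair v) = G u v.
Proof. by rewrite /cart_prod orbC. Qed.

Lemma proj1_swap (S : {set T1 * T2}) : proj1 (swap_pair @: S) = proj2 S.
Proof. by rewrite /proj1 -imset_comp. Qed.

End CartesianProduct.

Theorem theorem3 (T1 T2 : finType) (e1 : rel T1) (e2 : rel T2)
  (G1 : simple_graph e1) (G2 : simple_graph e2)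
  (S : {set T1 * T2}) (k : int) :
  (oaf e1 k (proj1 S) ->
     oaf (cart_prod e1 e2) (k - (mindeg e2)%:Z)%R S) /\
  (oaf e2 k (proj2 S) ->
     oaf (cart_prod e1 e2) (k - (mindeg e1)%:Z)%R S).
Proof.
have [[_ e1_irr] [_ e2_irr]] := (G1, G2).
split; first exact: oaf_proj1.
rewrite -proj1_swap => /(oaf_proj1 (e2 := e1) e2_irr) swapped_oaf.
have := oaf_iso swap_pairK swap_pairK (cart_prod_swap e2 e1) swapped_oaf.
by rewrite (imset_can (@swap_pairK T1 T2)).
Qed.
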